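(* Let $f:(\mathcal A,\equiv_A)\to(\mathcal C,\equiv_C)$ and $g:(\mathcal B,\equiv_B)\to(\mathcal C,\equiv_C)$ be total maps of equivalence families, with underlying sets $A=\bigcup\mathcal A$, $B=\bigcup\mathcal B$. Let $D=\{(a,b)\in A\times B\mid f(a)\equiv_C g(b)\}$ with projections $\pi_1,\pi_2$, let $d\equiv_D d'$ iff $\pi_1(d)\equiv_A\pi_1(d')$ and $\pi_2(d)\equiv_B\pi_2(d')$, and let $\mathcal D$ consist of those $x\subseteq D$ with $\pi_1x\in\mathcal A$, $\pi_2x\in\mathcal B$ and such that for every $d\in x$ there are $d_1,\dots,d_n\in x$ with $d_n=d$ and $\pi_1\{d_1,\dots,d_i\}\in\mathcal A$ and $\pi_2\{d_1,\dots,d_i\}\in\mathcal B$ for all $i\le n$. Then $(\mathcal D,\equiv_D)$ with $\pi_1,\pi_2$ is a pseudo pullback of $f$ and $g$ in the category of equivalence families; if $\equiv_C$ is the identity it is moreover a pullback.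
   Context: A family of configurations is a family $\mathcal F$ of sets such that (i) if $X\subseteq\mathcal F$ is finitely compatible in $\mathcal F$ (every finite subfamily has an upper bound in $\mathcal F$) then $\bigcup X\in\mathcal F$; and (ii) if $e\in x\in\mathcal F$ there are $e_1,\dots,e_n=e$ in $x$ with $\{e_1,\dots,e_i\}\in\mathcal F$ for all $i\le n$. An equivalence family (ef) $(\mathcal A,\equiv_A)$ is a family of configurations $\mathcal A$ with an equivalence relation $\equiv_A$ on $\bigcup\mathcal A$. A map of ef's $f:(\mathcal A,\equiv_A)\to(\mathcal B,\equiv_B)$ is a partial function $f:\bigcup\mathcal A\rightharpoonup\bigcup\mathcal B$ preserving $\equiv$ (if $a_1\equiv_A a_2$ then $f(a_1),f(a_2)$ are both undefined or both defined and equivalent) such that for every $x\in\mathcal A$, $fx\in\mathcal B$ and for $a_1,a_2\in x$, $f(a_1)\equiv_B f(a_2)$ implies $a_1\equiv_A a_2$. Maps compose as partial functions. Two maps are equivalent, $f_1\equiv f_2$, iff they are defined on the same elements and $f_1(a)\equiv f_2(a)$ wherever defined. A pseudo pullback of $f,g$ is an ef $\mathcal D$ with maps $p:\mathcal D\to\mathcal A$, $q:\mathcal D\to\mathcal B$ such that $f\circ p\equiv g\circ q$ and for every $\mathcal D'$ with maps $p',q'$ satisfying $f\circ p'\equiv g\circ q'$ there is a unique map $h:\mathcal D'\to\mathcal D$ with $p'=p\circ h$ and $q'=q\circ h$. *)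

From Stdlib Require Import List.
Import ListNotations.

Definition set_of (T : Type) := T -> Prop.
Definition subset {T} (x y : T -> Prop) := forall e, x e -> y e.
Definition set_of_list {T} (l : list T) : T -> Prop := fun e => In e l.
Definition bigunion {T} (X : (T -> Prop) -> Prop) : T -> Prop :=
  fun e => exists y, X y /\ y e.

Definition fin_compatible {T} (F : (T -> Prop) -> Prop) (X : (T -> Prop) -> Prop) :=
  forall l : list (T -> Prop), (forall y, In y l -> X y) ->
    exists z, F z /\ forall y, In y l -> subset y z.

Definition family_of_configurations {T} (F : (T -> Prop) -> Prop) : Prop :=
  (forall X : (T -> Prop) -> Prop, subset X F -> fin_compatible F X -> F (bigunion X))
  /\
  (forall x e, F x -> x e ->
     exists l : list T, l <> [] /\ last l e = e /\ (forall e', In e' l -> x e') /\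
       forall i, 1 <= i <= length l -> F (set_of_list (firstn i l))).

Record ef := EF { carrier : Type;
                  fam : (carrier -> Prop) -> Prop;
                  eqv : carrier -> carrier -> Prop }.

Definition inU (A : ef) : carrier A -> Prop := bigunion (fam A).

Definition equiv_on {T} (U : T -> Prop) (R : T -> T -> Prop) :=
  (forall a, U a -> R a a) /\
  (forall a b, U a -> U b -> R a b -> R b a) /\
  (forall a b c, U a -> U b -> U c -> R a b -> R b c -> R a c).

Definition is_ef (A : ef) : Prop :=
  family_of_configurations (fam A) /\ equiv_on (inU A) (eqv A).

(* partial maps; only their values on inU A matter *)
Definition pmap (A B : ef) := carrier A -> option (carrier B).

Definition image {A B : ef} (f : pmap A B) (x : carrier A -> Prop) : carrier B -> Prop :=
  fun b => exists a, x a /\ f a = Some b.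

Definition is_map (A B : ef) (f : pmap A B) : Prop :=
  (forall a, inU A a -> forall b, f a = Some b -> inU B b) /\
  (forall a1 a2, inU A a1 -> inU A a2 -> eqv A a1 a2 ->
     (f a1 = None /\ f a2 = None) \/
     exists b1 b2, f a1 = Some b1 /\ f a2 = Some b2 /\ eqv B b1 b2) /\
  (forall x, fam A x -> fam B (image f x)) /\
  (forall x, fam A x -> forall a1 a2 b1 b2, x a1 -> x a2 ->
     f a1 = Some b1 -> f a2 = Some b2 -> eqv B b1 b2 -> eqv A a1 a2).

Definition total_map (A B : ef) (f : pmap A B) : Prop :=
  forall a, inU A a -> exists b, f a = Some b.

Definition comp {A B C : ef} (g : pmap B C) (f : pmap A B) : pmap A C :=
  fun a => match f a with Some b => g b | None => None end.

Definition map_eq {A B : ef} (f1 f2 : pmap A B) : Prop :=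
  forall a, inU A a -> f1 a = f2 a.

Definition map_equiv {A B : ef} (f1 f2 : pmap A B) : Prop :=
  forall a, inU A a ->
    (f1 a = None <-> f2 a = None) /\
    (forall b1 b2, f1 a = Some b1 -> f2 a = Some b2 -> eqv B b1 b2).

Definition pseudo_pullback (A B C : ef) (f : pmap A C) (g : pmap B C)
    (D : ef) (p : pmap D A) (q : pmap D B) : Prop :=
  is_ef D /\ is_map D A p /\ is_map D B q /\ map_equiv (comp f p) (comp g q) /\
  forall (D' : ef) (p' : pmap D' A) (q' : pmap D' B),
    is_ef D' -> is_map D' A p' -> is_map D' B q' ->
    map_equiv (comp f p') (comp g q') ->
    exists h : pmap D' D, is_map D' D h /\ map_eq p' (comp p h) /\ map_eq q' (comp q h) /\
      forall h' : pmap D' D, is_map D' D h' ->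
        map_eq p' (comp p h') -> map_eq q' (comp q h') -> map_eq h' h.

Definition pullback (A B C : ef) (f : pmap A C) (g : pmap B C)
    (D : ef) (p : pmap D A) (q : pmap D B) : Prop :=
  is_ef D /\ is_map D A p /\ is_map D B q /\ map_eq (comp f p) (comp g q) /\
  forall (D' : ef) (p' : pmap D' A) (q' : pmap D' B),
    is_ef D' -> is_map D' A p' -> is_map D' B q' ->
    map_eq (comp f p') (comp g q') ->
    exists h : pmap D' D, is_map D' D h /\ map_eq p' (comp p h) /\ map_eq q' (comp q h) /\
      forall h' : pmap D' D, is_map D' D h' ->
        map_eq p' (comp p h') -> map_eq q' (comp q h') -> map_eq h' h.

Section Construction.
Variables (A B C : ef) (f : pmap A C) (g : pmap B C).

Definition inD (d : carrier A * carrier B) : Prop :=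
  inU A (fst d) /\ inU B (snd d) /\
  exists c1 c2, f (fst d) = Some c1 /\ g (snd d) = Some c2 /\ eqv C c1 c2.

Definition pi1set (x : carrier A * carrier B -> Prop) : carrier A -> Prop :=
  fun a => exists b, x (a, b).
Definition pi2set (x : carrier A * carrier B -> Prop) : carrier B -> Prop :=
  fun b => exists a, x (a, b).

Definition famD (x : carrier A * carrier B -> Prop) : Prop :=
  subset x inD /\ fam A (pi1set x) /\ fam B (pi2set x) /\
  forall d, x d ->
    exists l : list (carrier A * carrier B),
      l <> [] /\ last l d = d /\ (forall d', In d' l -> x d') /\
      forall i, 1 <= i <= length l ->
        fam A (pi1set (set_of_list (firstn i l))) /\
        fam B (pi2set (set_of_list (firstn i l))).

Definition eqD (d d' : carrier A * carrier B) : Prop :=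
  eqv A (fst d) (fst d') /\ eqv B (snd d) (snd d').

Definition pbD : ef := EF (carrier A * carrier B) famD eqD.

Definition pi1 : pmap pbD A := fun d => Some (fst d).
Definition pi2 : pmap pbD B := fun d => Some (snd d).
End Construction.

From Stdlib Require Import List Lia FunctionalExtensionality PropExtensionality.
Import ListNotations.

(* Both axioms of a family of configurations pass from A and B to D because
   projecting pairs commutes with unions and with taking prefixes of securing
   chains.  A projection reflects equivalence on a configuration since f
   preserves it, the pairs are f/g-compatible, and g reflects it on the other
   projection.  For a cone (p', q') the only candidate mediating map is
   d |-> (p' d, q' d); totality of f and g makes p' and q' defined on the same
   elements, and the cone condition puts the pair in D.  When [eqv C] is
   equality, map equivalence and map equality coincide on the cones. *)

Lemma pred_ext {T} (P Q : T -> Prop) : (forall x, P x <-> Q x) -> P = Q.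
Proof.
  intro H. apply functional_extensionality; intro x.
  apply propositional_extensionality; auto.
Qed.

Lemma in_firstn {T} (e : T) i l : In e (firstn i l) -> In e l.
Proof. intro H. rewrite <- (firstn_skipn i l). apply in_or_app; auto. Qed.

Fixpoint omap {X Y} (h : X -> option Y) (l : list X) : list Y :=
  match l with
  | [] => []
  | x :: t => match h x with Some y => y :: omap h t | None => omap h t end
  end.

Lemma in_omap {X Y} (h : X -> option Y) l y :
  In y (omap h l) <-> exists x, In x l /\ h x = Some y.
Proof.
  induction l as [|x t IH]; simpl.
  - split; [tauto|]. intros [? [[] _]].
  - destruct (h x) eqn:E; simpl; rewrite IH; split.
    + intros [<-|[x' [? ?]]]; eauto.
    + intros [x' [[<-|?] ?]]; [left; congruence | eauto].
    + intros [x' [? ?]]; eauto.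
    + intros [x' [[<-|?] ?]]; [congruence | eauto].
Qed.

Lemma omap_app {X Y} (h : X -> option Y) l1 l2 :
  omap h (l1 ++ l2) = omap h l1 ++ omap h l2.
Proof. induction l1 as [|x t IH]; simpl; auto. destruct (h x); simpl; rewrite IH; auto. Qed.

Lemma omap_firstn {X Y} (h : X -> option Y) l : forall i, i <= length (omap h l) ->
  exists j, j <= length l /\ firstn i (omap h l) = omap h (firstn j l).
Proof.
  induction l as [|x t IH]; simpl; intros i Hi.
  - exists 0. split; auto. destruct i; auto.
  - destruct (h x) eqn:E.
    + destruct i as [|i]; [exists 0; simpl; auto with arith|].
      simpl in Hi. destruct (IH i) as [j [Hj Ej]]; [lia|].
      exists (S j). simpl. rewrite E, Ej. split; auto; lia.
    + destruct (IH i Hi) as [j [Hj Ej]].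
      exists (S j). simpl. rewrite E, Ej. split; auto; lia.
Qed.

Lemma set_of_list_omap {X Y : ef} (h : pmap X Y) l :
  set_of_list (omap h l) = image h (set_of_list l).
Proof. apply pred_ext; intro e. apply in_omap. Qed.

Definition prefix_closed {T} (P : (T -> Prop) -> Prop) (l : list T) : Prop :=
  forall i, 1 <= i <= length l -> P (set_of_list (firstn i l)).

Definition chain_to {T} (P : (T -> Prop) -> Prop) (x : T -> Prop) (e : T) (l : list T) :=
  l <> [] /\ last l e = e /\ (forall e', In e' l -> x e') /\ prefix_closed P l.

Lemma prefix_closed_firstn {T} P (l : list T) i :
  prefix_closed P l -> prefix_closed P (firstn i l).
Proof.
  intros Hl j Hj. rewrite length_firstn in Hj. rewrite firstn_firstn.
  replace (Nat.min j i) with j by lia. apply Hl. lia.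
Qed.

Lemma prefix_closed_app_l {T} P (l r : list T) :
  prefix_closed P (l ++ r) -> prefix_closed P l.
Proof.
  intros H i Hi. replace (firstn i l) with (firstn i (l ++ r)).
  - apply H. rewrite length_app. lia.
  - rewrite firstn_app. replace (i - length l) with 0 by lia. apply app_nil_r.
Qed.

Lemma prefix_closed_chain_to {T} P (l : list T) e :
  prefix_closed P l -> In e l -> exists l', chain_to P (set_of_list l) e l'.
Proof.
  intros Hl He. destruct (in_split _ _ He) as [l1 [l2 ->]].
  exists (l1 ++ [e]). split; [|split; [|split]].
  - apply not_eq_sym, app_cons_not_nil.
  - apply last_last.
  - intros e' He'. unfold set_of_list. apply in_app_or in He'. apply in_or_app.
    simpl in *. tauto.
  - apply (prefix_closed_app_l _ _ l2). rewrite <- app_assoc. exact Hl.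
Qed.

Lemma prefix_closed_omap {X Y : ef} (h : pmap X Y) P Q x l :
  (forall s, subset s x -> P s -> Q (image h s)) -> (forall d, In d l -> x d) ->
  prefix_closed P l -> prefix_closed Q (omap h l).
Proof.
  intros HPQ Hin Hl i Hi. destruct (omap_firstn h l i (proj2 Hi)) as [j [Hj Ej]].
  assert (Hj1 : 1 <= j).
  { destruct j; [|lia]. apply (f_equal (@length _)) in Ej.
    rewrite length_firstn in Ej. simpl in Ej. lia. }
  rewrite Ej, set_of_list_omap. apply HPQ.
  - intros d Hd. apply Hin, (in_firstn d j), Hd.
  - apply Hl. lia.
Qed.

Lemma chain_to_omap {X Y : ef} (h : pmap X Y) P Q x d e l :
  (forall s, subset s x -> P s -> Q (image h s)) -> h d = Some e ->
  chain_to P x d l -> chain_to Q (image h x) e (omap h l).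
Proof.
  intros HPQ He [Hne [Hlast [Hin Hl]]].
  assert (Hpc : prefix_closed Q (omap h l)) by exact (prefix_closed_omap h P Q x l HPQ Hin Hl).
  assert (Himg : forall e', In e' (omap h l) -> image h x e').
  { intros e' He'. apply in_omap in He'. destruct He' as [d' [Hd' E]]. exists d'; auto. }
  destruct (exists_last Hne) as [l0 [d0 ->]]. rewrite last_last in Hlast. subst d0.
  rewrite omap_app in *. simpl in *. rewrite He in *.
  split; [apply not_eq_sym, app_cons_not_nil | split; [apply last_last | split]]; assumption.
Qed.

Lemma list_choose_preimages {S T} (X : S -> Prop) (P : S -> T) l :
  (forall y, In y l -> exists x, X x /\ y = P x) ->
  exists lx, (forall x, In x lx -> X x) /\ forall y, In y l -> exists x, In x lx /\ y = P x.
Proof.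
  induction l as [|y l IH]; intro H.
  - exists []. simpl; tauto.
  - destruct IH as [lx [H1 H2]]; [intros; apply H; simpl; auto|].
    destruct (H y (or_introl eq_refl)) as [x [Hx ->]].
    exists (x :: lx). split.
    + intros x' [<-|]; auto.
    + intros y' [<-|Hy]; [exists x; simpl; auto|].
      destruct (H2 y' Hy) as [x' [? ?]]. exists x'; simpl; auto.
Qed.

Lemma fam_bigunion_image {S T} (FS : (S -> Prop) -> Prop) (F : (T -> Prop) -> Prop)
    (P : (S -> Prop) -> (T -> Prop)) :
  family_of_configurations F ->
  (forall x y, subset x y -> subset (P x) (P y)) ->
  (forall X, P (bigunion X) = bigunion (fun y => exists x, X x /\ y = P x)) ->
  (forall x, FS x -> F (P x)) ->
  forall X, subset X FS -> fin_compatible FS X -> F (P (bigunion X)).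
Proof.
  intros HF Hmono Hcomm HP X HX Hfc. rewrite Hcomm. apply (proj1 HF).
  - intros y [x [Hx ->]]. auto.
  - intros l Hl. destruct (list_choose_preimages X P l Hl) as [lx [H1 H2]].
    destruct (Hfc lx H1) as [z [Hz Hsub]]. exists (P z). split; auto.
    intros y Hy. destruct (H2 y Hy) as [x [Hin ->]]. apply Hmono; auto.
Qed.

Lemma pi1set_mono A B x y : subset x y -> subset (pi1set A B x) (pi1set A B y).
Proof. intros H a [b Hb]. exists b; auto. Qed.

Lemma pi2set_mono A B x y : subset x y -> subset (pi2set A B x) (pi2set A B y).
Proof. intros H b [a Ha]. exists a; auto. Qed.

Lemma pi1set_bigunion A B X :
  pi1set A B (bigunion X) = bigunion (fun y => exists x, X x /\ y = pi1set A B x).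
Proof.
  apply pred_ext; intro a; split.
  - intros [b [x [Hx Hab]]]. exists (pi1set A B x). split; eauto. exists b; auto.
  - intros [y [[x [Hx ->]] [b Hb]]]. exists b, x; auto.
Qed.

Lemma pi2set_bigunion A B X :
  pi2set A B (bigunion X) = bigunion (fun y => exists x, X x /\ y = pi2set A B x).
Proof.
  apply pred_ext; intro b; split.
  - intros [a [x [Hx Hab]]]. exists (pi2set A B x). split; eauto. exists a; auto.
  - intros [y [[x [Hx ->]] [a Ha]]]. exists a, x; auto.
Qed.

Lemma equiv_on_square {T} (U : T -> Prop) R a b c d : equiv_on U R ->
  U a -> U b -> U c -> U d -> R a c -> R b d -> (R a b <-> R c d).
Proof.
  intros [_ [Hsym Htrans]] Ua Ub Uc Ud Hac Hbd. split; intro H.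
  - apply (Htrans c b d); auto. apply (Htrans c a b); auto.
  - apply (Htrans a d b); auto. apply (Htrans a c d); auto.
Qed.

Lemma is_map_eqv {X Y : ef} (h : pmap X Y) a1 a2 c1 c2 : is_map X Y h ->
  inU X a1 -> inU X a2 -> eqv X a1 a2 -> h a1 = Some c1 -> h a2 = Some c2 -> eqv Y c1 c2.
Proof.
  intros [_ [Hpres _]] U1 U2 E H1 H2.
  destruct (Hpres a1 a2 U1 U2 E) as [[N _]|[k1 [k2 [K1 [K2 K]]]]]; congruence.
Qed.

Lemma comp_inU {X Y Z : ef} (h : pmap X Y) (k : pmap Y Z) a c :
  is_map X Y h -> is_map Y Z k -> inU X a -> comp k h a = Some c -> inU Z c.
Proof.
  intros Hh Hk Ha. unfold comp. destruct (h a) as [b|] eqn:E; [|discriminate].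
  apply (proj1 Hk). apply (proj1 Hh a Ha b E).
Qed.

Section PullbackConstruction.

Variables (A B C : ef) (f : pmap A C) (g : pmap B C).

Notation D := (pbD A B C f g).

Definition proj_fam (s : carrier A * carrier B -> Prop) : Prop :=
  fam A (pi1set A B s) /\ fam B (pi2set A B s).

Lemma inU_pbD d : inU D d -> inD A B C f g d.
Proof. intros [x [Hx Hd]]. apply (proj1 Hx d Hd). Qed.

Lemma famD_of_chain l : l <> [] -> subset (set_of_list l) (inD A B C f g) ->
  prefix_closed proj_fam l -> famD A B C f g (set_of_list l).
Proof.
  intros Hne Hsub Hl.
  assert (Hall : proj_fam (set_of_list l)).
  { rewrite <- (firstn_all l). apply Hl. destruct l; [congruence | simpl; lia]. }
  split; [exact Hsub | split; [apply Hall | split; [apply Hall |]]].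
  intros d Hd. exact (prefix_closed_chain_to proj_fam l d Hl Hd).
Qed.

Lemma famD_chain x d : famD A B C f g x -> x d -> exists l, chain_to (famD A B C f g) x d l.
Proof.
  intros [Hsub [_ [_ Hchain]]] Hd.
  destruct (Hchain d Hd) as [l [Hne [Hlast [Hin Hl]]]].
  exists l. split; [|split; [|split]]; auto.
  intros i Hi. apply famD_of_chain.
  - intro E. apply (f_equal (@length _)) in E. rewrite length_firstn in E. simpl in E. lia.
  - intros e He. apply Hsub, Hin, (in_firstn e i), He.
  - apply prefix_closed_firstn. exact Hl.
Qed.

Section Properties.

Hypotheses (HA : is_ef A) (HB : is_ef B) (HC : is_ef C)
  (Hf : is_map A C f) (Hg : is_map B C g).

Lemma famD_bigunion X : subset X (famD A B C f g) -> fin_compatible (famD A B C f g) X ->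
  famD A B C f g (bigunion X).
Proof.
  intros HX Hfc. split; [|split; [|split]].
  - intros d [x [Hx Hd]]. apply (HX x Hx), Hd.
  - apply (fam_bigunion_image (famD A B C f g) (fam A) (pi1set A B) (proj1 HA)
      (pi1set_mono A B) (pi1set_bigunion A B)); auto.
    intros x Hx; apply Hx.
  - apply (fam_bigunion_image (famD A B C f g) (fam B) (pi2set A B) (proj1 HB)
      (pi2set_mono A B) (pi2set_bigunion A B)); auto.
    intros x Hx; apply Hx.
  - intros d [x [Hx Hd]].
    destruct (proj2 (proj2 (proj2 (HX x Hx))) d Hd) as [l [Hne [Hlast [Hin Hl]]]].
    exists l. split; [|split; [|split]]; auto. intros d' Hd'. exists x; auto.
Qed.

Lemma pbD_is_ef : is_ef D.
Proof.
  split; [split|].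
  - exact famD_bigunion.
  - intros x e Hx He. exact (famD_chain x e Hx He).
  - assert (HU : forall d, inU D d -> inU A (fst d) /\ inU B (snd d)).
    { intros d Hd. destruct (inU_pbD d Hd) as [? [? _]]; auto. }
    destruct HA as [_ [RA [SA TA]]], HB as [_ [RB [SB TB]]].
    split; [|split].
    + intros d Hd. destruct (HU d Hd). split; simpl; auto.
    + intros d1 d2 H1 H2 [E1 E2].
      destruct (HU d1 H1), (HU d2 H2). split; simpl; auto.
    + intros d1 d2 d3 H1 H2 H3 [E1 E2] [F1 F2].
      destruct (HU d1 H1), (HU d2 H2), (HU d3 H3). split; simpl; eauto.
Qed.

Lemma inD_eqv_images_iff a1 b1 a2 b2 c1 c2 k1 k2 :
  inD A B C f g (a1, b1) -> inD A B C f g (a2, b2) ->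
  f a1 = Some k1 -> f a2 = Some k2 -> g b1 = Some c1 -> g b2 = Some c2 ->
  (eqv C k1 k2 <-> eqv C c1 c2).
Proof.
  intros [UA1 [UB1 [k1' [c1' [F1 [G1 Q1]]]]]] [UA2 [UB2 [k2' [c2' [F2 [G2 Q2]]]]]] Fa1 Fa2 Gb1 Gb2.
  simpl in *. rewrite Fa1 in F1. rewrite Fa2 in F2. rewrite Gb1 in G1. rewrite Gb2 in G2.
  injection F1 as <-. injection F2 as <-. injection G1 as <-. injection G2 as <-.
  apply (equiv_on_square (inU C)); auto; try apply HC.
  - apply (proj1 Hf a1); auto.
  - apply (proj1 Hf a2); auto.
  - apply (proj1 Hg b1); auto.
  - apply (proj1 Hg b2); auto.
Qed.

Lemma image_pi1 x : image (pi1 A B C f g) x = pi1set A B x.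
Proof.
  apply pred_ext; intro a; split.
  - intros [[a' b] [H E]]. injection E as <-. exists b; auto.
  - intros [b Hb]. exists (a, b); auto.
Qed.

Lemma image_pi2 x : image (pi2 A B C f g) x = pi2set A B x.
Proof.
  apply pred_ext; intro b; split.
  - intros [[a b'] [H E]]. injection E as <-. exists a; auto.
  - intros [a Ha]. exists (a, b); auto.
Qed.

Lemma pi1_is_map : is_map D A (pi1 A B C f g).
Proof.
  split; [|split; [|split]].
  - intros d Hd a E. injection E as <-. apply (inU_pbD d Hd).
  - intros d1 d2 _ _ [E _]. right. exists (fst d1), (fst d2). auto.
  - intros x Hx. rewrite image_pi1. apply Hx.
  - intros x Hx [a1 b1] [a2 b2] ? ? H1 H2 E1 E2 Ha.
    injection E1 as <-. injection E2 as <-. split; [exact Ha|]. simpl.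
    destruct (proj1 Hx _ H1) as [UA1 [UB1 [k1 [c1 [F1 [G1 _]]]]]].
    destruct (proj1 Hx _ H2) as [UA2 [UB2 [k2 [c2 [F2 [G2 _]]]]]].
    apply (proj2 (proj2 (proj2 Hg)) (pi2set A B x) (proj1 (proj2 (proj2 Hx))) b1 b2 c1 c2);
      [exists a1 | exists a2 | | |]; auto.
    apply (inD_eqv_images_iff a1 b1 a2 b2 c1 c2 k1 k2 (proj1 Hx _ H1) (proj1 Hx _ H2)); auto.
    apply (is_map_eqv f a1 a2); auto.
Qed.

Lemma pi2_is_map : is_map D B (pi2 A B C f g).
Proof.
  split; [|split; [|split]].
  - intros d Hd b E. injection E as <-. apply (inU_pbD d Hd).
  - intros d1 d2 _ _ [_ E]. right. exists (snd d1), (snd d2). auto.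
  - intros x Hx. rewrite image_pi2. apply Hx.
  - intros x Hx [a1 b1] [a2 b2] ? ? H1 H2 E1 E2 Hb.
    injection E1 as <-. injection E2 as <-. split; [|exact Hb]. simpl.
    destruct (proj1 Hx _ H1) as [UA1 [UB1 [k1 [c1 [F1 [G1 _]]]]]].
    destruct (proj1 Hx _ H2) as [UA2 [UB2 [k2 [c2 [F2 [G2 _]]]]]].
    apply (proj2 (proj2 (proj2 Hf)) (pi1set A B x) (proj1 (proj2 Hx)) a1 a2 k1 k2);
      [exists b1 | exists b2 | | |]; auto.
    apply (inD_eqv_images_iff a1 b1 a2 b2 c1 c2 k1 k2 (proj1 Hx _ H1) (proj1 Hx _ H2)); auto.
    apply (is_map_eqv g b1 b2); auto.
Qed.

Lemma pi_square_equiv : map_equiv (comp f (pi1 A B C f g)) (comp g (pi2 A B C f g)).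
Proof.
  intros d Hd. destruct (inU_pbD d Hd) as [_ [_ [c1 [c2 [F [G E]]]]]].
  unfold comp, pi1, pi2. rewrite F, G. split; [split; discriminate|].
  intros k1 k2 [= <-] [= <-]. exact E.
Qed.

Lemma pi_square_eq : (forall c c', inU C c -> inU C c' -> (eqv C c c' <-> c = c')) ->
  map_eq (comp f (pi1 A B C f g)) (comp g (pi2 A B C f g)).
Proof.
  intros Hdisc d Hd. destruct (inU_pbD d Hd) as [UA [UB [c1 [c2 [F [G E]]]]]].
  unfold comp, pi1, pi2. rewrite F, G. f_equal. apply Hdisc; auto.
  - apply (proj1 Hf (fst d)); auto.
  - apply (proj1 Hg (snd d)); auto.
Qed.

Section Universal.

Variables (D' : ef) (p' : pmap D' A) (q' : pmap D' B).
Hypotheses (Tf : total_map A C f) (Tg : total_map B C g) (HD' : is_ef D')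
  (Hp : is_map D' A p') (Hq : is_map D' B q') (Hcone : map_equiv (comp f p') (comp g q')).

Definition pairing : pmap D' D :=
  fun d => match p' d, q' d with Some a, Some b => Some (a, b) | _, _ => None end.

(* Totality of f and g is used here: otherwise p' could be defined where q' is not. *)
Lemma cone_defined_together d : inU D' d -> (p' d = None <-> q' d = None).
Proof.
  intros Hd. destruct (Hcone d Hd) as [E _]. unfold comp in E.
  destruct (p' d) as [a|] eqn:Pa, (q' d) as [b|] eqn:Qb;
    try (split; intro; discriminate); try tauto.
  - destruct (Tf a (proj1 Hp d Hd a Pa)) as [c Hc]. rewrite Hc in E.
    specialize (proj2 E eq_refl). discriminate.
  - destruct (Tg b (proj1 Hq d Hd b Qb)) as [c Hc]. rewrite Hc in E.
    specialize (proj1 E eq_refl). discriminate.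
Qed.

Lemma cone_inD d a b : inU D' d -> p' d = Some a -> q' d = Some b -> inD A B C f g (a, b).
Proof.
  intros Hd Pa Qb. pose proof (proj1 Hp d Hd a Pa) as UA. pose proof (proj1 Hq d Hd b Qb) as UB.
  destruct (Tf a UA) as [c1 F1], (Tg b UB) as [c2 G2].
  split; [|split]; auto. exists c1, c2. split; [|split]; auto.
  apply (proj2 (Hcone d Hd)); unfold comp; rewrite ?Pa, ?Qb; auto.
Qed.

Lemma pi1_pairing : map_eq p' (comp (pi1 A B C f g) pairing).
Proof.
  intros d Hd. unfold comp, pairing, pi1.
  destruct (p' d) eqn:Pa, (q' d) eqn:Qb; auto.
  apply (cone_defined_together d Hd) in Qb. congruence.
Qed.

Lemma pi2_pairing : map_eq q' (comp (pi2 A B C f g) pairing).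
Proof.
  intros d Hd. unfold comp, pairing, pi2.
  destruct (p' d) eqn:Pa, (q' d) eqn:Qb; auto.
  apply (cone_defined_together d Hd) in Pa. congruence.
Qed.

Lemma pi1set_image_pairing s : subset s (inU D') -> pi1set A B (image pairing s) = image p' s.
Proof.
  intros Hs. apply pred_ext; intro a; split.
  - intros [b [d [Hd E]]]. exists d. split; auto. rewrite (pi1_pairing d (Hs d Hd)).
    unfold comp. rewrite E. reflexivity.
  - intros [d [Hd Pa]]. rewrite (pi1_pairing d (Hs d Hd)) in Pa. unfold comp in Pa.
    destruct (pairing d) as [[a' b]|] eqn:E; [|discriminate].
    injection Pa as <-. exists b, d. auto.
Qed.

Lemma pi2set_image_pairing s : subset s (inU D') -> pi2set A B (image pairing s) = image q' s.
Proof.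
  intros Hs. apply pred_ext; intro b; split.
  - intros [a [d [Hd E]]]. exists d. split; auto. rewrite (pi2_pairing d (Hs d Hd)).
    unfold comp. rewrite E. reflexivity.
  - intros [d [Hd Qb]]. rewrite (pi2_pairing d (Hs d Hd)) in Qb. unfold comp in Qb.
    destruct (pairing d) as [[a b']|] eqn:E; [|discriminate].
    injection Qb as <-. exists a, d. auto.
Qed.

Lemma proj_fam_image_pairing s : subset s (inU D') -> fam D' s -> proj_fam (image pairing s).
Proof.
  intros Hs Hfam. unfold proj_fam. rewrite pi1set_image_pairing, pi2set_image_pairing by exact Hs.
  split; [apply (proj1 (proj2 (proj2 Hp))) | apply (proj1 (proj2 (proj2 Hq)))]; exact Hfam.
Qed.

Lemma famD_image_pairing x : fam D' x -> famD A B C f g (image pairing x).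
Proof.
  intros Hx. assert (Sx : subset x (inU D')) by (intros d Hd; exists x; auto).
  split; [|split; [|split]].
  - intros [a b] [d [Hd E]]. unfold pairing in E.
    destruct (p' d) eqn:Pa, (q' d) eqn:Qb; try discriminate. injection E as <- <-.
    apply (cone_inD d); auto.
  - apply (proj_fam_image_pairing x Sx Hx).
  - apply (proj_fam_image_pairing x Sx Hx).
  - intros e [d [Hd E]].
    destruct (proj2 (proj1 HD') x d Hx Hd) as [l Hl].
    exists (omap pairing l).
    apply (chain_to_omap pairing (fam D') proj_fam x d e l); auto.
    intros s Hs. apply proj_fam_image_pairing.
    intros d' Hd'. apply Sx, Hs, Hd'.
Qed.

Lemma pairing_is_map : is_map D' D pairing.
Proof.
  split; [|split; [|split]].
  - intros d [x [Hx Hd]] e E. exists (image pairing x).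
    split; [apply famD_image_pairing; auto | exists d; auto].
  - intros d1 d2 H1 H2 E. unfold pairing.
    destruct (proj1 (proj2 Hp) d1 d2 H1 H2 E) as [[P1 P2]|[a1 [a2 [P1 [P2 Ea]]]]];
    destruct (proj1 (proj2 Hq) d1 d2 H1 H2 E) as [[Q1 Q2]|[b1 [b2 [Q1 [Q2 Eb]]]]];
    rewrite ?P1, ?P2, ?Q1, ?Q2; auto.
    right. exists (a1, b1), (a2, b2). repeat split; auto.
  - exact famD_image_pairing.
  - intros x Hx d1 d2 [a1 b1] [a2 b2] H1 H2 E1 E2 [Ea Eb]. unfold pairing in E1, E2.
    destruct (p' d1) eqn:P1, (q' d1) eqn:Q1; try discriminate.
    destruct (p' d2) eqn:P2, (q' d2) eqn:Q2; try discriminate.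
    injection E1 as -> ->. injection E2 as -> ->.
    apply (proj2 (proj2 (proj2 Hp)) x Hx d1 d2 a1 a2); auto.
Qed.

Lemma pairing_unique (h : pmap D' D) :
  map_eq p' (comp (pi1 A B C f g) h) -> map_eq q' (comp (pi2 A B C f g) h) -> map_eq h pairing.
Proof.
  intros E1 E2 d Hd. specialize (E1 d Hd). specialize (E2 d Hd).
  unfold comp, pi1, pi2 in E1, E2. unfold pairing. rewrite E1, E2.
  destruct (h d) as [[a b]|]; auto.
Qed.

Lemma pbD_universal :
  exists h : pmap D' D, is_map D' D h /\
    map_eq p' (comp (pi1 A B C f g) h) /\ map_eq q' (comp (pi2 A B C f g) h) /\
    forall h' : pmap D' D, is_map D' D h' ->
      map_eq p' (comp (pi1 A B C f g) h') -> map_eq q' (comp (pi2 A B C f g) h') -> map_eq h' h.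
Proof.
  exists pairing. split; [exact pairing_is_map | split; [exact pi1_pairing | split]].
  - exact pi2_pairing.
  - intros h' _. apply pairing_unique.
Qed.

End Universal.

End Properties.

End PullbackConstruction.

Lemma map_eq_map_equiv_discrete {X Y : ef} (h1 h2 : pmap X Y) :
  (forall c c', inU Y c -> inU Y c' -> (eqv Y c c' <-> c = c')) ->
  (forall a c, inU X a -> h1 a = Some c -> inU Y c) ->
  map_eq h1 h2 -> map_equiv h1 h2.
Proof.
  intros Hdisc Hval E a Ha. rewrite <- (E a Ha). split; [tauto|].
  intros c1 c2 E1 E2. rewrite E1 in E2. injection E2 as <-.
  apply Hdisc; [apply (Hval a) | apply (Hval a) | reflexivity]; auto.
Qed.

Theorem mainTheorem9 (A B C : ef) (f : pmap A C) (g : pmap B C) :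
  is_ef A -> is_ef B -> is_ef C ->
  is_map A C f -> is_map B C g -> total_map A C f -> total_map B C g ->
  pseudo_pullback A B C f g (pbD A B C f g) (pi1 A B C f g) (pi2 A B C f g) /\
  ((forall c c', inU C c -> inU C c' -> (eqv C c c' <-> c = c')) ->
   pullback A B C f g (pbD A B C f g) (pi1 A B C f g) (pi2 A B C f g)).
Proof.
  intros HA HB HC Hf Hg Tf Tg.
  assert (HD : is_ef (pbD A B C f g)) by (apply pbD_is_ef; auto).
  assert (Hpi1 : is_map _ A (pi1 A B C f g)) by (apply pi1_is_map; auto).
  assert (Hpi2 : is_map _ B (pi2 A B C f g)) by (apply pi2_is_map; auto).
  split; [|intros Hdisc].
  - split; [exact HD | split; [exact Hpi1 | split; [exact Hpi2 | split]]].
    + apply pi_square_equiv.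
    + intros D' p' q' HD' Hp Hq Hcone. apply pbD_universal; auto.
  - split; [exact HD | split; [exact Hpi1 | split; [exact Hpi2 | split]]].
    + apply pi_square_eq; auto.
    + intros D' p' q' HD' Hp Hq Hcone. apply pbD_universal; auto.
      apply map_eq_map_equiv_discrete; auto.
      intros d c Hd. apply (comp_inU p' f d c); auto.
Qed.
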